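(* Define, for real $x$, \[ c(x)=\left(\frac{160}{\pi^{5}}-\frac{16}{\pi^{3}}\right)\left(\frac{\pi}{2}-x\right),\qquad d(x)=c(x)+\left(\frac{960}{\pi^{6}}-\frac{96}{\pi^{4}}\right)\left(\frac{\pi}{2}-x\right)^{2}. \] Then for every $x\in\left(\frac{\pi}{2}-\frac{1}{3},\frac{\pi}{2}\right)$, \[ 2+\left(\frac{16}{\pi^{4}}+c(x)\right)x^{3}\tan x<\left(\frac{\sin x}{x}\right)^{2}+\frac{\tan x}{x}, \] and for every $x\in\left(\frac{\pi}{2}-\frac{1}{2},\frac{\pi}{2}\right)$, \[ \left(\frac{\sin x}{x}\right)^{2}+\frac{\tan x}{x}<2+\left(\frac{16}{\pi^{4}}+d(x)\right)x^{3}\tan x. \] *)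

From Stdlib Require Import Reals.
Open Scope R_scope.

Definition c_fun (x : R) : R :=
  (160 / PI ^ 5 - 16 / PI ^ 3) * (PI / 2 - x).

Definition d_fun (x : R) : R :=
  c_fun x + (960 / PI ^ 6 - 96 / PI ^ 4) * (PI / 2 - x) ^ 2.

(* Put t = PI/2 - x, so that sin x = cos t and cos x = sin t.  Clearing the
   (positive) denominators, each inequality says that
   P (c^2 s + x c - 2 x^2 s) - K x^5 c has a definite sign, where s = sin t,
   c = cos t, P = PI^5 (resp. PI^6) and K/P = 16/PI^4 + c(x) (resp. d(x)).
   This expression decreases in s and increases in c as long as
   c^2 <= 2 x^2 and K x^4 <= P, so s and c may be replaced by Taylor
   polynomials bounding them on the appropriate side.  Since 16/PI^4, c and d
   are the first Taylor coefficients of ((sin x/x)^2 + tan x/x - 2)/(x^3 tan x)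
   at x = PI/2, the result is t^2 (resp. t^3) times a polynomial in t and PI,
   and it remains to show that this polynomial (and the one expressing
   K x^4 <= P) is positive for
   0 < t < 1/3 (resp. 1/2) and PI near 3.141592.  This is certified by exact
   rational computation: PI is replaced by 3.141592 at the cost of a Lipschitz
   bound, and the resulting univariate polynomial is bounded below on each
   interval [k/6, (k+1)/6] from the coefficients of its Taylor expansion at
   k/6. *)

From Stdlib Require Import Reals Lra QArith Qabs Qreals List.
Import ListNotations.

(** * Certified positivity of polynomials *)

Open Scope Q_scope.

Fixpoint Qpeval (l : list Q) (x : Q) : Q :=
  match l with [] => 0 | a :: l => a + x * Qpeval l x end.

Definition add_const (a : Q) (l : list Q) : list Q :=
  match l with [] => [a] | b :: l => Qred (a + b) :: l end.

Fixpoint mul_lin (c : Q) (l : list Q) : list Q :=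
  match l with [] => [] | a :: l => Qred (c * a) :: add_const a (mul_lin c l) end.

Fixpoint shift (c : Q) (l : list Q) : list Q :=
  match l with [] => [] | a :: l => add_const a (mul_lin c (shift c l)) end.

(* For 0 <= u <= h and v >= r: u v >= 0 if r >= 0, and u v >= h r otherwise. *)
Fixpoint lower_bound (h : Q) (l : list Q) : Q :=
  match l with
  | [] => 0
  | a :: l => let r := lower_bound h l in Qred (a + if Qle_bool 0 r then 0 else h * r)
  end.

Fixpoint pieces_above (m h : Q) (l : list Q) (n : nat) : bool :=
  negb (Qle_bool (lower_bound h (shift (inject_Z (Z.of_nat n) * h) l)) m) &&
  match n with O => true | S k => pieces_above m h l k end.

Fixpoint abs_bound (P : Q) (l : list Q) : Q :=
  match l with [] => 0 | a :: l => Qabs a + P * abs_bound P l end.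

Fixpoint lip_bound (P : Q) (l : list Q) : Q :=
  match l with [] => 0 | _ :: l => abs_bound P l + P * lip_bound P l end.

Fixpoint lip_bound2 (T P : Q) (L : list (list Q)) : Q :=
  match L with [] => 0 | l :: L => lip_bound P l + T * lip_bound2 T P L end.

Definition at_p (L : list (list Q)) (p : Q) : list Q := map (fun l => Qpeval l p) L.

Definition positivity_certificate (L : list (list Q)) (p0 d P h : Q) (n : nat) : bool :=
  pieces_above (d * lip_bound2 (inject_Z (Z.of_nat (S n)) * h) P L) h (at_p L p0) n.

Close Scope Q_scope.
Open Scope R_scope.

Fixpoint peval (l : list Q) (x : R) : R :=
  match l with [] => 0 | a :: l => Q2R a + x * peval l x end.

Fixpoint peval2 (L : list (list Q)) (t p : R) : R :=
  match L with [] => 0 | l :: L => peval l p + t * peval2 L t p end.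

Lemma Q2R_zero : Q2R 0 = 0.
Proof. unfold Q2R; simpl; ring. Qed.

Lemma Q2R_Qred (q : Q) : Q2R (Qred q) = Q2R q.
Proof. exact (Qeq_eqR _ _ (Qred_correct q)). Qed.

Lemma Q2R_Qabs (q : Q) : Q2R (Qabs q) = Rabs (Q2R q).
Proof.
  apply Qabs_case; intros Hq; [apply Qle_Rle in Hq | apply Qle_Rle in Hq; rewrite Q2R_opp];
    rewrite Q2R_zero in Hq.
  - now rewrite Rabs_right by lra.
  - now rewrite Rabs_left1 by lra.
Qed.

Lemma Q2R_lt_of_Qle_bool_false (a b : Q) : Qle_bool a b = false -> Q2R b < Q2R a.
Proof.
  intros H. apply Qlt_Rlt, Qnot_le_lt. intros Hle. apply Qle_bool_iff in Hle. congruence.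
Qed.

Lemma Q2R_inject_Z_nat (n : nat) : Q2R (inject_Z (Z.of_nat n)) = INR n.
Proof. unfold Q2R; simpl. rewrite INR_IZR_INZ. lra. Qed.

Lemma Q2R_frac (a : Z) (b : positive) : Q2R (a # b) = IZR a / IZR (Z.pos b).
Proof. reflexivity. Qed.

Lemma peval_Qpeval (l : list Q) (x : Q) : Q2R (Qpeval l x) = peval l (Q2R x).
Proof.
  induction l as [|a l IH]; simpl; [apply Q2R_zero|].
  now rewrite Q2R_plus, Q2R_mult, IH.
Qed.

Lemma peval_add_const (a : Q) (l : list Q) (x : R) :
  peval (add_const a l) x = Q2R a + peval l x.
Proof. destruct l as [|b l]; cbn [peval add_const]; rewrite ?Q2R_Qred, ?Q2R_plus; ring. Qed.

Lemma peval_mul_lin (c : Q) (l : list Q) (x : R) :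
  peval (mul_lin c l) x = (x + Q2R c) * peval l x.
Proof.
  induction l as [|a l IH]; cbn [peval mul_lin]; [ring|].
  rewrite peval_add_const, IH, Q2R_Qred, Q2R_mult. ring.
Qed.

Lemma peval_shift (c : Q) (l : list Q) (x : R) :
  peval (shift c l) x = peval l (x + Q2R c).
Proof.
  induction l as [|a l IH]; cbn [peval shift]; [reflexivity|].
  now rewrite peval_add_const, peval_mul_lin, IH.
Qed.

Lemma lower_bound_le_peval (h : Q) (l : list Q) (x : R) :
  0 <= x <= Q2R h -> Q2R (lower_bound h l) <= peval l x.
Proof.
  intros Hx. induction l as [|a l IH]; cbn [peval lower_bound]; [rewrite Q2R_zero; lra|].
  rewrite Q2R_Qred, Q2R_plus.
  destruct (Qle_bool 0 (lower_bound h l)) eqn:Hr.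
  - apply Qle_bool_iff, Qle_Rle in Hr. rewrite Q2R_zero in *.
    assert (0 <= x * peval l x) by (apply Rmult_le_pos; lra). lra.
  - rewrite Q2R_mult.
    apply Q2R_lt_of_Qle_bool_false in Hr. rewrite Q2R_zero in Hr.
    nra.
Qed.

Lemma lower_bound_shift_le_peval (h : Q) (l : list Q) (k : nat) (x : R) :
  INR k * Q2R h <= x <= INR (S k) * Q2R h ->
  Q2R (lower_bound h (shift (inject_Z (Z.of_nat k) * h) l)) <= peval l x.
Proof.
  intros Hx.
  replace x with (x - INR k * Q2R h + Q2R (inject_Z (Z.of_nat k) * h)%Q)
    by (rewrite Q2R_mult, Q2R_inject_Z_nat; ring).
  rewrite <- peval_shift. apply lower_bound_le_peval. rewrite S_INR in Hx. lra.
Qed.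

Lemma pieces_above_lt (m h : Q) (l : list Q) (n : nat) (x : R) :
  pieces_above m h l n = true ->
  0 <= x <= INR (S n) * Q2R h -> Q2R m < peval l x.
Proof.
  induction n as [|n IH]; cbn [pieces_above]; intros Hc Hx;
    apply andb_true_iff in Hc as [Hc Hrest]; apply negb_true_iff, Q2R_lt_of_Qle_bool_false in Hc.
  - eapply Rlt_le_trans; [exact Hc|]. apply lower_bound_shift_le_peval. simpl INR in *. lra.
  - destruct (Rle_lt_dec x (INR (S n) * Q2R h)) as [Hle|Hgt]; [apply IH; auto; lra|].
    eapply Rlt_le_trans; [exact Hc|]. apply lower_bound_shift_le_peval. lra.
Qed.

Lemma abs_bound_nonneg (P : Q) (l : list Q) : 0 <= Q2R P -> 0 <= Q2R (abs_bound P l).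
Proof.
  intros HP. induction l as [|a l IH]; cbn [abs_bound]; [rewrite Q2R_zero; lra|].
  rewrite Q2R_plus, Q2R_mult, Q2R_Qabs. pose proof (Rabs_pos (Q2R a)). nra.
Qed.

Lemma lip_bound_nonneg (P : Q) (l : list Q) : 0 <= Q2R P -> 0 <= Q2R (lip_bound P l).
Proof.
  intros HP. induction l as [|a l IH]; cbn [lip_bound]; [rewrite Q2R_zero; lra|].
  rewrite Q2R_plus, Q2R_mult. pose proof (abs_bound_nonneg P l HP). nra.
Qed.

Lemma lip_bound2_nonneg (T P : Q) (L : list (list Q)) :
  0 <= Q2R T -> 0 <= Q2R P -> 0 <= Q2R (lip_bound2 T P L).
Proof.
  intros HT HP. induction L as [|l L IH]; cbn [lip_bound2]; [rewrite Q2R_zero; lra|].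
  rewrite Q2R_plus, Q2R_mult. pose proof (lip_bound_nonneg P l HP). nra.
Qed.

Lemma peval_abs_le (P : Q) (l : list Q) (x : R) :
  Rabs x <= Q2R P -> Rabs (peval l x) <= Q2R (abs_bound P l).
Proof.
  intros Hx. induction l as [|a l IH]; cbn [peval abs_bound].
  - rewrite Rabs_R0, Q2R_zero. lra.
  - rewrite Q2R_plus, Q2R_mult, Q2R_Qabs.
    eapply Rle_trans; [apply Rabs_triang|]. rewrite Rabs_mult.
    pose proof (Rabs_pos x). pose proof (Rabs_pos (peval l x)). nra.
Qed.

Lemma peval_lipschitz (P : Q) (l : list Q) (x y : R) :
  Rabs x <= Q2R P -> Rabs y <= Q2R P ->
  Rabs (peval l x - peval l y) <= Rabs (x - y) * Q2R (lip_bound P l).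
Proof.
  intros Hx Hy. induction l as [|a l IH]; cbn [peval lip_bound].
  - rewrite Q2R_zero. replace (0 - 0) with 0 by ring. rewrite Rabs_R0. lra.
  - rewrite Q2R_plus, Q2R_mult.
    replace (Q2R a + x * peval l x - (Q2R a + y * peval l y))
      with ((x - y) * peval l x + y * (peval l x - peval l y)) by ring.
    eapply Rle_trans; [apply Rabs_triang|]. rewrite !Rabs_mult.
    pose proof (peval_abs_le P l x Hx). pose proof (Rabs_pos (x - y)).
    pose proof (Rabs_pos y). pose proof (Rabs_pos (peval l x - peval l y)). nra.
Qed.

Lemma peval2_lipschitz (T P : Q) (L : list (list Q)) (t p q : R) :
  0 <= t <= Q2R T -> Rabs p <= Q2R P -> Rabs q <= Q2R P ->
  Rabs (peval2 L t p - peval2 L t q) <= Rabs (p - q) * Q2R (lip_bound2 T P L).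
Proof.
  intros Ht Hp Hq. induction L as [|l L IH]; cbn [peval2 lip_bound2].
  - rewrite Q2R_zero. replace (0 - 0) with 0 by ring. rewrite Rabs_R0. lra.
  - rewrite Q2R_plus, Q2R_mult.
    replace (peval l p + t * peval2 L t p - (peval l q + t * peval2 L t q))
      with ((peval l p - peval l q) + t * (peval2 L t p - peval2 L t q)) by ring.
    eapply Rle_trans; [apply Rabs_triang|]. rewrite Rabs_mult, (Rabs_right t) by lra.
    pose proof (peval_lipschitz P l p q Hp Hq). pose proof (Rabs_pos (p - q)).
    pose proof (Rabs_pos (peval2 L t p - peval2 L t q)). nra.
Qed.

Lemma peval2_at_p (L : list (list Q)) (t : R) (q : Q) :
  peval2 L t (Q2R q) = peval (at_p L q) t.
Proof.
  induction L as [|l L IH]; cbn [peval2 peval at_p map]; [reflexivity|].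
  rewrite peval_Qpeval. fold (at_p L q). now rewrite IH.
Qed.

Theorem peval2_pos (L : list (list Q)) (p0 d P h : Q) (n : nat) (t p : R) :
  positivity_certificate L p0 d P h n = true ->
  0 <= Q2R P -> 0 <= t <= INR (S n) * Q2R h ->
  Rabs (p - Q2R p0) <= Q2R d -> Rabs p <= Q2R P -> Rabs (Q2R p0) <= Q2R P ->
  0 < peval2 L t p.
Proof.
  intros Hc HP Ht Hd Hp Hp0. unfold positivity_certificate in Hc.
  remember (inject_Z (Z.of_nat (S n)) * h)%Q as T eqn:ET.
  assert (HT : Q2R T = INR (S n) * Q2R h) by (subst T; now rewrite Q2R_mult, Q2R_inject_Z_nat).
  assert (HM : 0 <= Q2R (lip_bound2 T P L)).
  { apply lip_bound2_nonneg; [lra | exact HP]. }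
  apply (pieces_above_lt _ _ _ _ t) in Hc; [|exact Ht].
  rewrite <- peval2_at_p, Q2R_mult in Hc.
  pose proof (peval2_lipschitz T P L t p (Q2R p0) ltac:(lra) Hp Hp0) as Hlip.
  rewrite Rabs_minus_sym in Hlip.
  pose proof (Rle_abs (peval2 L t (Q2R p0) - peval2 L t p)).
  pose proof (Rmult_le_compat_r _ _ _ HM Hd). lra.
Qed.

Lemma PI_bounds : 3141592 / 1000000 < PI < 3141593 / 1000000.
Proof.
  pose proof (PI_2_3_7_ineq 3) as H.
  unfold PI_2_3_7_tg, tg_alt, Ratan_seq in H. simpl sum_f_R0 in H. simpl INR in H.
  lra.
Qed.

Lemma peval2_pos_at_PI (L : list (list Q)) (n : nat) (t : R) :
  positivity_certificate L 3.141592 0.000001 4 (1 # 6) n = true ->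
  0 <= t <= INR (S n) / 6 -> 0 < peval2 L t PI.
Proof.
  intros Hc Ht. pose proof PI_bounds.
  apply (peval2_pos L _ _ _ _ n t PI Hc); rewrite ?Q2R_frac; try lra.
  all: unfold Rabs; destruct (Rcase_abs _); lra.
Qed.

(** * Reduction to polynomial inequalities *)

Definition defect (P K x s c : R) : R := P * (c^2 * s + x * c - 2 * x^2 * s) - K * x^5 * c.

Definition lower_coeff (p t : R) : R := 16 * p + 16 * (10 - p^2) * t.

Definition upper_coeff (p t : R) : R :=
  16 * p^2 + 16 * p * (10 - p^2) * t + 96 * (10 - p^2) * t^2.

Lemma defect_antitone (P K x s1 s2 c1 c2 : R) :
  0 <= P -> s1 <= s2 -> 0 <= s2 -> c2 <= c1 -> 0 <= c2 -> c1^2 <= 2 * x^2 ->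
  0 <= x * (P - K * x^4) ->
  defect P K x s2 c2 <= defect P K x s1 c1.
Proof.
  intros HP Hs Hs2 Hc Hc2 Hc1 Hmono.
  assert (E : defect P K x s1 c1 - defect P K x s2 c2
            = P * ((s2 - s1) * (2 * x^2 - c1^2)) + P * (s2 * ((c1 - c2) * (c1 + c2)))
              + (c1 - c2) * (x * (P - K * x^4))) by (unfold defect; ring).
  assert (0 <= P * ((s2 - s1) * (2 * x^2 - c1^2))) by (apply Rmult_le_pos; nra).
  assert (0 <= P * (s2 * ((c1 - c2) * (c1 + c2))))
    by (apply Rmult_le_pos; [lra | apply Rmult_le_pos; nra]).
  assert (0 <= (c1 - c2) * (x * (P - K * x^4))) by (apply Rmult_le_pos; lra).
  lra.
Qed.

Lemma tan_gap_eq (P K x : R) : 0 < P -> 0 < x -> 0 < cos x ->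
  (sin x / x)^2 + tan x / x - (2 + K / P * x^3 * tan x)
  = defect P K x (cos x) (sin x) / (P * x^2 * cos x).
Proof. intros HP Hx Hc. unfold tan, defect. field. lra. Qed.

Lemma sin_le_taylor5 (t : R) : 0 <= t <= PI -> sin t <= t - t^3/6 + t^5/120.
Proof.
  intros Ht. pose proof (sin_bound t 0 (proj1 Ht) (proj2 Ht)) as [_ H].
  unfold sin_approx, sin_term in H. simpl in H. lra.
Qed.

Lemma taylor3_le_sin (t : R) : 0 <= t <= PI -> t - t^3/6 <= sin t.
Proof.
  intros Ht. pose proof (sin_bound t 0 (proj1 Ht) (proj2 Ht)) as [H _].
  unfold sin_approx, sin_term in H. simpl in H. lra.
Qed.

Lemma taylor6_le_cos (t : R) : - PI / 2 <= t <= PI / 2 ->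
  1 - t^2/2 + t^4/24 - t^6/720 <= cos t.
Proof.
  intros Ht. pose proof (cos_bound t 1 (proj1 Ht) (proj2 Ht)) as [H _].
  unfold cos_approx, cos_term in H. simpl in H. lra.
Qed.

Lemma cos_le_taylor4 (t : R) : - PI / 2 <= t <= PI / 2 -> cos t <= 1 - t^2/2 + t^4/24.
Proof.
  intros Ht. pose proof (cos_bound t 0 (proj1 Ht) (proj2 Ht)) as [_ H].
  unfold cos_approx, cos_term in H. simpl in H. lra.
Qed.

Lemma lower_coeff_eq (p t : R) : 0 < p ->
  16 / p^4 + (160 / p^5 - 16 / p^3) * t = lower_coeff p t / p^5.
Proof. intros Hp. unfold lower_coeff. field. lra. Qed.

Lemma upper_coeff_eq (p t : R) : 0 < p ->
  16 / p^4 + ((160 / p^5 - 16 / p^3) * t + (960 / p^6 - 96 / p^4) * t^2)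
  = upper_coeff p t / p^6.
Proof. intros Hp. unfold upper_coeff. field. lra. Qed.

Open Scope Q_scope.

(* Row i holds the coefficient of t^i, as a polynomial in p. *)
Definition lower_gap : list (list Q) :=
  [[0; 0; 0; 0; 1866240000; 0; -186624000];
   [0; 0; 0; -9953280000; 0; 1078272000; 0; -10368000];
   [0; 0; 22394880000; 0; -3421440000; 0; 134784000];
   [0; -23887872000; 0; 7464960000; 0; -572313600; 0; 1036800];
   [9953280000; 0; -12192768000; 0; 1321920000; 0; -11923200];
   [0; 11943936000; 0; -1658880000; 0; 44150400; 0; -43200];
   [-4976640000; 0; 1430784000; 0; -106272000; 0; 432000];
   [0; -995328000; 0; 117504000; 0; -900000];
   [414720000; 0; -72576000; 0; 3456000];
   [0; 33177600; 0; -3456000; 0; -62640];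
   [-13824000; 0; 1382400];
   [0; 0; 0; 0; 0; 2940];
   [];
   [0; 0; 0; 0; 0; -80];
   [];
   [0; 0; 0; 0; 0; 1]].

Definition upper_gap : list (list Q) :=
  [[0; 0; 0; 0; -967680; 0; 87552; 0; 1152];
   [0; 0; 0; 5806080; 0; -552960; 0; -4608];
   [0; 0; -13934592; 0; 1866240; 0; -40032; 0; -144];
   [0; 15482880; 0; -4451328; 0; 276480; 0; 576];
   [-6635520; 0; 7630848; 0; -731520; 0; 3552];
   [0; -7741440; 0; 1016064; 0; -23040];
   [3317760; 0; -912384; 0; 57600; 0; -60];
   [0; 645120; 0; -64512];
   [-276480; 0; 27648; 0; 0; 0; 2]].

Definition lower_mono : list (list Q) :=
  [[0; 0; 0; 0; -32; 0; 16];
   [0; 0; 0; 896; 0; -128];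
   [0; 0; -3328; 0; 384];
   [0; 4864; 0; -512];
   [-2560; 0; 256]].

Definition upper_mono : list (list Q) :=
  [[0; 0; 0; 0; 0; -32; 0; 16];
   [0; 0; 0; 0; -64; 0; -32];
   [0; 0; 0; 4352; 0; -384];
   [0; 0; -18176; 0; 1792];
   [0; 28160; 0; -2816];
   [-15360; 0; 1536]].

Close Scope Q_scope.

Lemma lower_defect_taylor (p t x : R) : x = p / 2 - t ->
  defect (p^5) (lower_coeff p t) x (t - t^3/6 + t^5/120) (1 - t^2/2 + t^4/24 - t^6/720)
  = t^2 * peval2 lower_gap t p / 62208000.
Proof.
  intros ->. unfold defect, lower_coeff, lower_gap. cbn [peval2 peval].
  rewrite !Q2R_frac. field.
Qed.

Lemma upper_defect_taylor (p t x : R) : x = p / 2 - t ->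
  defect (p^6) (upper_coeff p t) x (t - t^3/6) (1 - t^2/2 + t^4/24)
  = - (t^3 * peval2 upper_gap t p / 6912).
Proof.
  intros ->. unfold defect, upper_coeff, upper_gap. cbn [peval2 peval].
  rewrite !Q2R_frac. field.
Qed.

Lemma lower_mono_eq (p t x : R) : x = p / 2 - t ->
  x * (p^5 - lower_coeff p t * x^4) = x * t * peval2 lower_mono t p / 16.
Proof.
  intros ->. unfold lower_coeff, lower_mono. cbn [peval2 peval].
  rewrite !Q2R_frac. field.
Qed.

Lemma upper_mono_eq (p t x : R) : x = p / 2 - t ->
  x * (p^6 - upper_coeff p t * x^4) = x * t * peval2 upper_mono t p / 16.
Proof.
  intros ->. unfold upper_coeff, upper_mono. cbn [peval2 peval].
  rewrite !Q2R_frac. field.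
Qed.

Lemma lower_defect_pos (t x : R) : 0 < t < 1 / 3 -> x = PI / 2 - t ->
  0 < defect (PI^5) (lower_coeff PI t) x (sin t) (cos t).
Proof.
  intros Ht Ext. pose proof PI_bounds.
  assert (Ht6 : 0 <= t <= INR 2 / 6) by (simpl INR; lra).
  assert (Hgap : 0 < defect (PI^5) (lower_coeff PI t) x
                       (t - t^3/6 + t^5/120) (1 - t^2/2 + t^4/24 - t^6/720)).
  { rewrite (lower_defect_taylor PI t x Ext).
    pose proof (peval2_pos_at_PI lower_gap 1 t ltac:(vm_compute; reflexivity) Ht6).
    assert (0 < t^2) by (apply pow_lt; lra). nra. }
  eapply Rlt_le_trans; [exact Hgap|]. apply defect_antitone.
  - apply pow_le. lra.
  - apply sin_le_taylor5. lra.
  - assert (t^3 <= t) by nra. assert (0 <= t^5) by (apply pow_le; lra). lra.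
  - apply taylor6_le_cos. lra.
  - assert (t^2 <= 1/9) by nra. assert (0 <= t^4) by (apply pow_le; lra).
    assert (t^6 <= t^4) by nra. lra.
  - assert (0 < cos t) by (apply cos_gt_0; lra). pose proof (COS_bound t). nra.
  - rewrite (lower_mono_eq PI t x Ext).
    pose proof (peval2_pos_at_PI lower_mono 1 t ltac:(vm_compute; reflexivity) Ht6).
    assert (0 <= x * t) by nra. nra.
Qed.

Lemma upper_defect_neg (t x : R) : 0 < t < 1 / 2 -> x = PI / 2 - t ->
  defect (PI^6) (upper_coeff PI t) x (sin t) (cos t) < 0.
Proof.
  intros Ht Ext. pose proof PI_bounds.
  assert (Ht6 : 0 <= t <= INR 3 / 6) by (simpl INR; lra).
  assert (Hgap : defect (PI^6) (upper_coeff PI t) x (t - t^3/6) (1 - t^2/2 + t^4/24) < 0).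
  { rewrite (upper_defect_taylor PI t x Ext).
    pose proof (peval2_pos_at_PI upper_gap 2 t ltac:(vm_compute; reflexivity) Ht6).
    assert (0 < t^3) by (apply pow_lt; lra). nra. }
  eapply Rle_lt_trans; [|exact Hgap]. apply defect_antitone.
  - apply pow_le. lra.
  - apply taylor3_le_sin. lra.
  - apply Rlt_le, sin_gt_0; lra.
  - apply cos_le_taylor4. lra.
  - apply Rlt_le, cos_gt_0; lra.
  - assert (t^2 <= 1/4) by nra. assert (0 <= t^4 <= t^2) by (split; [apply pow_le|]; nra).
    assert (0 <= 1 - t^2/2 + t^4/24 <= 1) by lra. nra.
  - rewrite (upper_mono_eq PI t x Ext).
    pose proof (peval2_pos_at_PI upper_mono 2 t ltac:(vm_compute; reflexivity) Ht6).
    assert (0 <= x * t) by nra. nra.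
Qed.

Lemma lower_inequality (x : R) : PI / 2 - 1 / 3 < x < PI / 2 ->
  2 + (16 / PI^4 + c_fun x) * x^3 * tan x < (sin x / x)^2 + tan x / x.
Proof.
  intros Hx. pose proof PI_bounds.
  set (t := PI / 2 - x).
  assert (Hsin : sin x = cos t) by (unfold t; now rewrite cos_shift).
  assert (Hcos : cos x = sin t) by (unfold t; now rewrite sin_shift).
  assert (Hst : 0 < sin t) by (apply sin_gt_0; unfold t; lra).
  assert (HP : 0 < PI^5) by (apply pow_lt; lra).
  unfold c_fun. fold t. rewrite lower_coeff_eq by lra.
  apply Rlt_0_minus. rewrite tan_gap_eq, Hsin, Hcos by lra.
  apply Rdiv_lt_0_compat.
  - apply lower_defect_pos; unfold t; [lra | ring].
  - apply Rmult_lt_0_compat; [apply Rmult_lt_0_compat|]; [exact HP | apply pow_lt; lra | exact Hst].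
Qed.

Lemma upper_inequality (x : R) : PI / 2 - 1 / 2 < x < PI / 2 ->
  (sin x / x)^2 + tan x / x < 2 + (16 / PI^4 + d_fun x) * x^3 * tan x.
Proof.
  intros Hx. pose proof PI_bounds.
  set (t := PI / 2 - x).
  assert (Hsin : sin x = cos t) by (unfold t; now rewrite cos_shift).
  assert (Hcos : cos x = sin t) by (unfold t; now rewrite sin_shift).
  assert (Hst : 0 < sin t) by (apply sin_gt_0; unfold t; lra).
  assert (HP : 0 < PI^6) by (apply pow_lt; lra).
  unfold d_fun, c_fun. fold t. rewrite upper_coeff_eq by lra.
  apply Rminus_lt. rewrite tan_gap_eq, Hsin, Hcos by lra.
  apply Rdiv_neg_pos.
  - apply upper_defect_neg; unfold t; [lra | ring].
  - apply Rmult_lt_0_compat; [apply Rmult_lt_0_compat|]; [exact HP | apply pow_lt; lra | exact Hst].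
Qed.

Theorem theorem2 :
  (forall x : R, PI / 2 - 1 / 3 < x < PI / 2 ->
     2 + (16 / PI ^ 4 + c_fun x) * x ^ 3 * tan x
       < (sin x / x) ^ 2 + tan x / x) /\
  (forall x : R, PI / 2 - 1 / 2 < x < PI / 2 ->
     (sin x / x) ^ 2 + tan x / x
       < 2 + (16 / PI ^ 4 + d_fun x) * x ^ 3 * tan x).
Proof. split; [exact lower_inequality | exact upper_inequality]. Qed.
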